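(* Let $G$ be a finite simple graph and let $\mathcal{V}$ be a maximum-cardinality collection of pairwise edge-disjoint triangles of $G$. Let $t\notin\mathcal{V}$ be a triangle sharing an edge with exactly two triangles $\psi_1,\psi_2\in\mathcal{V}$, where neither $\psi_1$ nor $\psi_2$ is of type $0$. Then: (1) $type(t)\neq[3,3]$, so the type of $t$ is either $[1,3]$ or $[1,1]$. (2) If $type(t)=[1,3]$ with $type(\psi_1)=1$ and $type(\psi_2)=3$, then either (i) $base(\psi_1)\in E(t)$, or (ii) exactly one triangle is singly-attached to $\psi_1$ and its anchoring vertex lies in $V(t)$; in this case $base(\psi_1)$ does not contain the common vertex of $V(\psi_1)\cap V(\psi_2)$.
   Context: Triangles are sets of three pairwise adjacent vertices, identified with their edge sets. A triangle $t\notin\mathcal{V}$ is singly-attached to $\psi\in\mathcal{V}$ if $\psi$ is the only triangle of $\mathcal{V}$ sharing an edge with $t$; the shared edge is a base-edge and the vertex of $V(t)\setminus V(\psi)$ is the anchoring vertex of $t$. For $\psi\in\mathcal{V}$, $base(\psi)$ is the set of edges of $\psi$ that are base-edges of triangles singly-attached to $\psi$, and $\psi$ has type $i$ if $|base(\psi)|=i$; when $|base(\psi)|=1$ we also write $base(\psi)$ for its unique base-edge. A triangle $t\notin\mathcal{V}$ sharing an edge with exactly two triangles $\psi_1,\psi_2\in\mathcal{V}$ has type $[type(\psi_1),type(\psi_2)]$, listed in nondecreasing order. *)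

(* A finite simple graph is a symmetric irreflexive relation
   g on a finType T. Triangles are represented by their vertex sets (for a
   simple graph the edge set determines and is determined by the vertex set);
   an edge of a triangle is a 2-subset of its vertex set. *)
From mathcomp Require Import all_boot.
Set Implicit Arguments. Unset Strict Implicit. Unset Printing Implicit Defensive.

Section Tri.
Variables (T : finType) (g : rel T).

Definition triangle (A : {set T}) : bool :=
  (#|A| == 3) && [forall x in A, forall y in A, (x != y) ==> g x y].

Definition share_edge (A B : {set T}) : bool := 2 <= #|A :&: B|.

Definition packing (P : {set {set T}}) : bool :=
  [forall A in P, triangle A] &&
  [forall A in P, forall B in P, (A != B) ==> ~~ share_edge A B].

Definition max_packing (P : {set {set T}}) : Prop :=
  packing P /\ forall W : {set {set T}}, packing W -> #|W| <= #|P|.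

(* t is singly-attached to psi (w.r.t. V): psi is the only member of V
   sharing an edge with t.  The base-edge is t :&: psi, the anchoring
   vertex is the unique element of t :\: psi. *)
Definition singly_attached (V : {set {set T}}) (t psi : {set T}) : bool :=
  [&& triangle t, t \notin V, psi \in V, share_edge t psi &
      [forall phi in V, share_edge t phi ==> (phi == psi)]].

Definition base (V : {set {set T}}) (psi : {set T}) : {set {set T}} :=
  [set f : {set T} | [exists t : {set T}, singly_attached V t psi && (f == t :&: psi)]].

Definition type (V : {set {set T}}) (psi : {set T}) : nat := #|base V psi|.

End Tri.

(* A member psi of a maximum packing V has type 0, 1 or 3.  Two triangles singly attached
   to psi must share an edge, since otherwise they could replace psi in V; so two base-edges
   of psi have a common anchor a, and then all three outer triangles of the K4 on
   psi + a are singly attached to psi.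
   Write t = xyz, psi1 = xyp and psi2 = yzq.  If psi2 has type 3 with anchor a, then the
   triangle zqa is edge-disjoint from t and from every triangle s singly attached to psi1,
   so s must share an edge with t (else t, s, zqa would replace psi1, psi2).  Hence s either
   has base-edge xy or is pxz.  Type [3,3] fails because ypa would be such an s, and in
   type [1,3] the unique base-edge of psi1 is xy, or px with pxz the only triangle attached. *)

From mathcomp Require Import all_boot zify.
Set Implicit Arguments. Unset Strict Implicit. Unset Printing Implicit Defensive.

(* Section variables cannot be substituted, hence the explicit contradiction rules. *)
Ltac vertex_cases :=
  repeat match goal with
  | H : is_true (_ && _) |- _ => case/andP: H => ? ?
  | H : is_true (_ || _) |- _ => case/orP: H => H
  | H : is_true (?i == ?i) |- _ => clear H
  | H : is_true (?i != ?i) |- _ => by rewrite eqxx in H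
  | H : is_true (?i == ?j), N : is_true (?i != ?j) |- _ => by rewrite H in N
  | H : is_true (?i == ?j), N : is_true (?j != ?i) |- _ => by rewrite eq_sym H in N
  | H : is_true (?i == ?j) |- _ => move/eqP: H => H; first [subst i | subst j]
  end.

Section FiniteSets.
Variable T : finType.
Implicit Types (A B f : {set T}) (a b c u v w : T).

Lemma share_edgeC A B : share_edge A B = share_edge B A.
Proof. by rewrite /share_edge setIC. Qed.

Lemma share_edge_of A B u v :
  u != v -> u \in A -> v \in A -> u \in B -> v \in B -> share_edge A B.
Proof. by move=> uv uA vA uB vB; apply/card_gt1P; exists u, v; rewrite !inE uA vA uB vB. Qed.

Lemma no_share_edge_sub1 A B c : A :&: B \subset [set c] -> ~~ share_edge A B.
Proof. by move/subset_leq_card; rewrite cards1 /share_edge -ltnNge ltnS. Qed.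

Lemma cards3E a b c : (#|[set a; b; c]| == 3) = [&& a != b, b != c & a != c].
Proof.
rewrite setUC !cardsU1 cards1 !inE (eq_sym b c) (eq_sym a c).
by case: (c == a); case: (c == b); case: (a == b).
Qed.

Lemma set3C12 a b c : [set a; b; c] = [set b; a; c].
Proof. by rewrite (setUC [set a]). Qed.

Lemma set2_of_card2 A u : #|A| = 2 -> u \in A -> exists v, A = [set u; v].
Proof.
move=> A2 uA; have /cards1P[v Av] : #|A :\ u| == 1.
  by move: A2; rewrite (cardsD1 u) uA add1n => -[->].
by exists v; rewrite -Av setD1K.
Qed.

Lemma set3_of_card3 A u v : #|A| = 3 -> u \in A -> v \in A -> u != v ->
  exists w, A = [set u; v; w].
Proof.
move=> A3 uA vA uv; have vAu : v \in A :\ u by rewrite !inE eq_sym uv.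
have Au2 : #|A :\ u| = 2 by move: A3; rewrite (cardsD1 u) uA add1n => -[].
have [w Aw] := set2_of_card2 Au2 vAu.
by exists w; rewrite -setUA -Aw setD1K.
Qed.

Lemma edges_of_set3 f c u w : f \subset [set c; u; w] -> #|f| = 2 ->
  [\/ f = [set c; u], f = [set c; w] | f = [set u; w]].
Proof.
move=> /subsetP fS /eqP/cards2P[i [j [ij fE]]]; subst f.
have := fS i; have := fS j; rewrite !inE !eqxx orbT => /(_ isT) jS /(_ isT) iS.
vertex_cases; by [constructor 1 | constructor 2 | constructor 3
                 | constructor 1; rewrite setUC | constructor 2; rewrite setUC
                 | constructor 3; rewrite setUC].
Qed.

Lemma two_edges_common A f1 f2 : #|A| = 3 -> f1 \subset A -> f2 \subset A ->
  #|f1| = 2 -> #|f2| = 2 -> f1 != f2 ->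
  exists c u w, [/\ A = [set c; u; w], f1 = [set c; u] & f2 = [set c; w]].
Proof.
move=> A3 f1A f2A f1c f2c f12.
have [c /setIP[cf1 cf2]] : exists c, c \in f1 :&: f2.
  apply/set0Pn; rewrite -card_gt0.
  have := subset_leq_card (_ : f1 :|: f2 \subset A); rewrite subUset f1A f2A => /(_ isT).
  have := cardsUI f1 f2; lia.
have [u f1E] := set2_of_card2 f1c cf1; have [w f2E] := set2_of_card2 f2c cf2.
have cuw3 : #|[set c; u; w]| == 3.
  have cu : c != u by move: f1c; rewrite f1E cards2; case: (c != u).
  have cw : c != w by move: f2c; rewrite f2E cards2; case: (c != w).
  by rewrite cards3E cu cw andbT; apply: contraNneq f12 => uw; rewrite f1E f2E uw.
exists c, u, w; split => //; apply/eqP; rewrite eq_sym eqEcard A3 (eqP cuw3) leqnn andbT.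
by rewrite subUset -f1E f1A sub1set (subsetP f2A) // f2E !inE eqxx orbT.
Qed.

End FiniteSets.

Section Triangles.
Variables (T : finType) (g : rel T).
Hypothesis g_sym : symmetric g.
Implicit Types (A B : {set T}) (a b c : T).

Lemma triangle_card A : triangle g A -> #|A| = 3.
Proof. by case/andP=> /eqP. Qed.

Lemma triangle_adj A a b : triangle g A -> a \in A -> b \in A -> a != b -> g a b.
Proof.
case/andP=> _ /forall_inP adj aA bA ab.
by move/forall_inP: (adj a aA) => /(_ b bA)/implyP; apply.
Qed.

Lemma triangle_set3_neq a b c : triangle g [set a; b; c] -> [/\ a != b, b != c & a != c].
Proof. by move/triangle_card/eqP; rewrite cards3E => /and3P. Qed.

Lemma triangle_set3 a b c : a != b -> b != c -> a != c -> g a b -> g b c -> g a c ->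
  triangle g [set a; b; c].
Proof.
move=> ab bc ac gab gbc gac; apply/andP; split; first by rewrite cards3E ab bc ac.
apply/forall_inP => i iS; apply/forall_inP => j jS; apply/implyP => ij.
rewrite !inE in iS jS; vertex_cases; by rewrite // g_sym.
Qed.

Lemma triangle_share_edge_refl A : triangle g A -> share_edge A A.
Proof. by move/triangle_card => A3; rewrite /share_edge setIid A3. Qed.

Lemma packingP (P : {set {set T}}) :
  reflect ((forall A, A \in P -> triangle g A) /\
           (forall A B, A \in P -> B \in P -> A != B -> ~~ share_edge A B))
          (packing g P).
Proof.
apply: (iffP andP) => [[/forall_inP P_tri /forall_inP P_dis]|[P_tri P_dis]]; split => //.
- by move=> A B AP BP; move/forall_inP: (P_dis A AP) => /(_ B BP)/implyP.
- exact/forall_inP.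
- apply/forall_inP => A AP; apply/forall_inP => B BP; apply/implyP; exact: P_dis.
Qed.

Lemma packing_set3 A B C : triangle g A -> triangle g B -> triangle g C ->
  ~~ share_edge A B -> ~~ share_edge A C -> ~~ share_edge B C ->
  packing g [set A; B; C] /\ #|[set A; B; C]| = 3.
Proof.
move=> tA tB tC nAB nAC nBC.
have neq X Y : triangle g X -> ~~ share_edge X Y -> X != Y.
  by move=> tX; apply: contra => /eqP <-; apply: triangle_share_edge_refl.
split; last by apply/eqP; rewrite cards3E !neq.
apply/packingP; split=> [X|X Y]; rewrite !inE.
  by case/orP=> [/orP[]|] /eqP->.
case/orP=> [/orP[]|] /eqP-> /orP[/orP[]|] /eqP->; rewrite ?eqxx // => _;
  by rewrite // share_edgeC.
Qed.

End Triangles.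

Section MaximumPacking.
Variables (T : finType) (g : rel T) (V : {set {set T}}).
Hypothesis g_sym : symmetric g.
Hypotheses (V_packing : packing g V) (V_max : forall W, packing g W -> #|W| <= #|V|).
Implicit Types (A B s f psi : {set T}) (a b c u v w : T).

Local Notation sa := (singly_attached g V).

Lemma packing_triangle A : A \in V -> triangle g A.
Proof. by case/packingP: V_packing => V_tri _; apply: V_tri. Qed.

Lemma packing_eq A B : A \in V -> B \in V -> share_edge A B -> A = B.
Proof.
case/packingP: V_packing => _ V_dis AV BV sh; apply/eqP.
by apply: contraLR sh; apply: V_dis.
Qed.

(* V :\: R :|: N is again a packing. *)
Lemma packing_exchange (R N : {set {set T}}) : R \subset V -> packing g N ->
  (forall A B, A \in N -> B \in V -> share_edge A B -> B \in R) -> #|N| <= #|R|.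
Proof.
move=> RV /packingP[N_tri N_dis] N_att.
have NVR A : A \in N -> A \in V -> A \in R.
  by move=> AN AV; apply: (N_att A A AN AV); apply/triangle_share_edge_refl/N_tri.
have W_packing : packing g (V :\: R :|: N).
  apply/packingP; split=> [A|A B]; rewrite !inE.
    by case/orP=> [/andP[_ /packing_triangle]|/N_tri].
  case/orP=> [/andP[AR AV]|AN]; case/orP=> [/andP[BR BV]|BN] AB.
  - by apply: contra AB => /(packing_eq AV BV) ->.
  - by apply: contra AR => sh; apply: (N_att B A BN AV); rewrite share_edgeC.
  - by apply: contra BR; apply: (N_att A B AN BV).
  - exact: N_dis.
have VRN : (V :\: R) :&: N = set0.
  apply/setP => A; rewrite !inE; apply/negbTE.
  by apply/negP => /andP[/andP[AR AV] AN]; rewrite (NVR A AN AV) in AR.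
have := V_max W_packing; have := subset_leq_card RV.
rewrite cardsU VRN cards0 (cardsDS RV); lia.
Qed.

Lemma singly_attachedP s psi :
  reflect [/\ triangle g s, s \notin V, psi \in V, share_edge s psi &
              forall phi, phi \in V -> share_edge s phi -> phi = psi]
          (sa s psi).
Proof.
apply: (iffP and5P) => [[ts sV psiV sh /forall_inP only]|[ts sV psiV sh only]].
  by split => // phi phiV /(implyP (only phi phiV)) /eqP.
by split => //; apply/forall_inP => phi phiV; apply/implyP => /(only phi phiV) ->.
Qed.

Lemma singly_attached_triangle s psi : sa s psi -> triangle g s.
Proof. by case/singly_attachedP. Qed.

Lemma singly_attached_eq s psi phi :
  sa s psi -> phi \in V -> share_edge s phi -> phi = psi.
Proof. by case/singly_attachedP=> _ _ _ _; apply. Qed.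

Lemma baseP psi f : reflect (exists2 s, sa s psi & f = s :&: psi) (f \in base g V psi).
Proof.
rewrite inE; apply: (iffP existsP) => [[s /andP[S /eqP fE]]|[s S fE]]; first by exists s.
by exists s; rewrite S fE eqxx.
Qed.

Lemma singly_attached_anchor s psi : sa s psi ->
  exists a, [/\ a \notin psi, #|s :&: psi| = 2 & s = s :&: psi :|: [set a]].
Proof.
case/singly_attachedP=> ts sV psiV sh _; have s3 := triangle_card ts.
have si2 : #|s :&: psi| = 2.
  have : #|s :&: psi| <= 3 by rewrite -s3 subset_leq_card ?subsetIl.
  have : #|s :&: psi| != 3.
    apply: contra sV => /eqP si3.
    have /eqP <- : s :&: psi == s by rewrite eqEcard subsetIl si3 s3.
    have /eqP -> : s :&: psi == psi.
      by rewrite eqEcard subsetIr si3 (triangle_card (packing_triangle psiV)).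
    done.
  by move: sh; rewrite /share_edge; lia.
have /cards1P[a sDa] : #|s :\: psi| == 1 by rewrite cardsD s3 si2.
have : a \in s :\: psi by rewrite sDa set11.
by rewrite inE => /andP[aN _]; exists a; rewrite -sDa setID.
Qed.

Lemma base_edge psi f : f \in base g V psi -> f \subset psi /\ #|f| = 2.
Proof.
case/baseP=> s S ->; split; first exact: subsetIr.
by have [a []] := singly_attached_anchor S.
Qed.

Lemma singly_attached_base psi f a : f \subset psi -> a \notin psi ->
  sa (f :|: [set a]) psi -> f \in base g V psi.
Proof.
move=> fpsi aN S; apply/baseP; exists (f :|: [set a]) => //.
apply/setP => i; rewrite !inE; case: (boolP (i \in f)) => [/(subsetP fpsi) -> //|_] /=.
by case: eqP => // ->; rewrite (negbTE aN).
Qed.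

Lemma singly_attached_share_edge psi s1 s2 : sa s1 psi -> sa s2 psi -> share_edge s1 s2.
Proof.
move=> S1 S2; apply: contraT => nsh.
have /singly_attachedP[t1 _ psiV _ only1] := S1.
have /singly_attachedP[t2 _ _ _ only2] := S2.
have s12 : s1 != s2 by apply: contraNneq nsh => <-; exact: triangle_share_edge_refl t1.
suff : #|[set s1; s2]| <= #|[set psi]| by rewrite cards2 s12 cards1.
apply: packing_exchange; first by rewrite sub1set.
  apply/packingP; split=> [A|A B]; rewrite !inE; first by case/orP=> /eqP->.
  by case/orP=> /eqP-> /orP[]/eqP->; rewrite ?eqxx // share_edgeC.
by move=> A B; rewrite !inE => /orP[]/eqP-> BV sh; rewrite ?(only1 _ BV sh) ?(only2 _ BV sh).
Qed.

Lemma singly_attached_no_share_edge s psi B : sa s psi -> [disjoint psi & B] ->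
  ~~ share_edge s B.
Proof.
move=> S psiB; have [a [_ _ sE]] := singly_attached_anchor S.
apply: (no_share_edge_sub1 (c := a)); apply/subsetP => i /setIP[].
by rewrite sE !inE => /orP[/andP[_ /(disjointFr psiB) ->]|].
Qed.

Section AttachedToOneTriangle.
Variables c u w : T.
Local Notation psi := [set c; u; w].
Hypothesis psiV : psi \in V.

Lemma singly_attached_anchor_eq a b : a \notin psi -> b \notin psi ->
  sa [set c; u; a] psi -> sa [set c; w; b] psi -> a = b.
Proof.
move=> aN bN Sa Sb; apply: contraTeq (singly_attached_share_edge Sa Sb) => ab.
have [cu uw cw] := triangle_set3_neq (packing_triangle psiV).
apply: (no_share_edge_sub1 (c := c)); apply/subsetP => i.
rewrite !inE !negb_or in aN bN * => iS; vertex_cases; by rewrite ?eqxx.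
Qed.

Lemma singly_attached_third a : a \notin psi ->
  sa [set c; u; a] psi -> sa [set c; w; a] psi -> sa [set u; w; a] psi.
Proof.
move=> aN Su Sw; have [cu uw cw] := triangle_set3_neq (packing_triangle psiV).
have [au aw] : a != u /\ a != w by move: aN; rewrite !inE !negb_or => /andP[/andP[]].
apply/singly_attachedP; split => //.
- apply: triangle_set3; rewrite // 1?eq_sym //.
  + by apply: (triangle_adj (packing_triangle psiV)); rewrite ?inE ?eqxx ?orbT.
  + by apply: (triangle_adj (singly_attached_triangle Sw)); rewrite ?inE ?eqxx ?orbT // eq_sym.
  + by apply: (triangle_adj (singly_attached_triangle Su)); rewrite ?inE ?eqxx ?orbT // eq_sym.
- apply: contra aN => inV; rewrite -(singly_attached_eq Su inV); last first.
    by apply: (share_edge_of (u := u) (v := a)); rewrite ?inE ?eqxx ?orbT // eq_sym.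
  by rewrite !inE eqxx orbT.
- by apply: (share_edge_of uw); rewrite !inE eqxx ?orbT.
- move=> phi phiV /card_gt1P[i [j [/setIP[iS iphi] /setIP[jS jphi] ij]]].
  have sh (X : {set T}) : i \in X -> j \in X -> share_edge X phi.
    by move=> iX jX; apply: (share_edge_of ij).
  rewrite !inE in iS jS; vertex_cases;
  first [ by apply: packing_eq phiV psiV _; rewrite share_edgeC; apply: sh;
              rewrite !inE eqxx ?orbT
        | by apply: (singly_attached_eq Su phiV); apply: sh; rewrite !inE eqxx ?orbT
        | by apply: (singly_attached_eq Sw phiV); apply: sh; rewrite !inE eqxx ?orbT ].
Qed.

End AttachedToOneTriangle.

Lemma base_anchor psi f : f \in base g V psi ->
  exists2 a, a \notin psi & sa (f :|: [set a]) psi.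
Proof.
case/baseP=> s S ->; have [a [aN _ sE]] := singly_attached_anchor S.
by exists a; rewrite -?sE.
Qed.

Lemma type_le3 psi : psi \in V -> type g V psi <= 3.
Proof.
move=> psiV; rewrite /type -[3]/'C(3, 2) -(triangle_card (packing_triangle psiV)) -cards_draws.
by apply/subset_leq_card/subsetP => f /base_edge[fpsi f2]; rewrite inE fpsi f2 eqxx.
Qed.

Lemma type_gt1_anchor psi : psi \in V -> 1 < type g V psi ->
  exists2 a, a \notin psi &
    forall u v, u \in psi -> v \in psi -> u != v -> sa [set u; v; a] psi.
Proof.
move=> psiV /card_gt1P[f1 [f2 [B1 B2 f12]]].
have [f1psi f1c] := base_edge B1; have [f2psi f2c] := base_edge B2.
have [c [u [w [psiE f1E f2E]]]] :=
  two_edges_common (triangle_card (packing_triangle psiV)) f1psi f2psi f1c f2c f12.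
subst psi f1 f2.
have [a aN Sa] := base_anchor B1; have [b bN Sb] := base_anchor B2.
have ab := singly_attached_anchor_eq psiV aN bN Sa Sb; subst b.
have Suw := singly_attached_third psiV aN Sa Sb.
exists a => // i j iS jS ij.
have /edges_of_set3 : [set i; j] \subset [set c; u; w] by rewrite subUset !sub1set iS jS.
by rewrite cards2 ij => /(_ erefl) [] ->.
Qed.

Lemma type_gt1 psi : psi \in V -> 1 < type g V psi -> type g V psi = 3.
Proof.
move=> psiV /(type_gt1_anchor psiV)[a aN Sa].
apply/eqP; rewrite eqn_leq type_le3 //=.
rewrite -[3]/'C(3, 2) -(triangle_card (packing_triangle psiV)) -cards_draws.
apply/subset_leq_card/subsetP => f; rewrite inE => /andP[fpsi /cards2P[i [j [ij fE]]]].
move: (fpsi); rewrite fE subUset !sub1set => /andP[iS jS].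
by rewrite -fE; apply: (singly_attached_base fpsi aN); rewrite fE; apply: Sa.
Qed.

Lemma type_cases psi : psi \in V ->
  [\/ type g V psi = 0, type g V psi = 1 | type g V psi = 3].
Proof.
move=> psiV; case: (ltnP 1 (type g V psi)) => [/(type_gt1 psiV)|]; first by constructor 3.
by case: (type g V psi) => [|[|]] // _; [constructor 1 | constructor 2].
Qed.

Lemma two_triangles_normal_form t psi1 psi2 : triangle g t -> psi1 \in V -> psi2 \in V ->
  psi1 != psi2 -> share_edge t psi1 -> share_edge t psi2 ->
  exists x y z p q,
    [/\ t = [set x; y; z], psi1 = [set x; y; p] & psi2 = [set y; z; q]].
Proof.
move=> tt psi1V psi2V psi12 /card_gt1P[i [j [/setIP[it i1] /setIP[jt j1] ij]]].
move=> /card_gt1P[k [l [/setIP[kt k2] /setIP[lt l2] kl]]].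
have [z tE] := set3_of_card3 (triangle_card tt) it jt ij.
have [p psi1E] := set3_of_card3 (triangle_card (packing_triangle psi1V)) i1 j1 ij.
have psi2_3 := triangle_card (packing_triangle psi2V).
have normal x y : t = [set x; y; z] -> psi1 = [set x; y; p] ->
    y \in psi2 -> z \in psi2 -> y != z ->
    exists x y z p q, [/\ t = [set x; y; z], psi1 = [set x; y; p] & psi2 = [set y; z; q]].
  by move=> -> -> y2 z2 yz; have [q ->] := set3_of_card3 psi2_3 y2 z2 yz; exists x, y, z, p, q.
have tE' : t = [set j; i; z] by rewrite tE set3C12.
have psi1E' : psi1 = [set j; i; p] by rewrite psi1E set3C12.
have lk : l != k by rewrite eq_sym.
rewrite tE !inE in kt lt; vertex_cases.
all: first [ exact: (normal i j tE psi1E k2 l2 kl) | exact: (normal i j tE psi1E l2 k2 lk)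
           | exact: (normal j i tE' psi1E' k2 l2 kl) | exact: (normal j i tE' psi1E' l2 k2 lk)
           | case/negP: psi12; apply/eqP/(packing_eq psi1V psi2V);
             first [ exact: (share_edge_of ij i1 j1 k2 l2)
                   | exact: (share_edge_of ij i1 j1 l2 k2) ] ].
Qed.

Section TwoAttachedTriangles.
Variables x y z p q : T.
Local Notation t := [set x; y; z].
Local Notation psi1 := [set x; y; p].
Local Notation psi2 := [set y; z; q].
Hypotheses (t_triangle : triangle g t) (t_notin_V : t \notin V)
  (psi1V : psi1 \in V) (psi2V : psi2 \in V) (psi12 : psi1 != psi2)
  (t_attached : forall phi, phi \in V -> share_edge t phi -> phi = psi1 \/ phi = psi2).

Let vertices_uniq : uniq [:: x; y; z; p; q].
Proof.
have [xy yz xz] := triangle_set3_neq t_triangle.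
have [_ yp xp] := triangle_set3_neq (packing_triangle psi1V).
have [_ zq yq] := triangle_set3_neq (packing_triangle psi2V).
have zp : z != p by apply: contraNneq t_notin_V => ->.
have xq : x != q.
  apply: contraNneq t_notin_V => ->.
  by rewrite (_ : [set q; y; z] = psi2) // [RHS]setUC setUA.
have pq : p != q.
  apply: contraNneq psi12 => pq; apply/eqP/(packing_eq psi1V psi2V).
  by apply: (share_edge_of yp); rewrite !inE ?pq eqxx ?orbT.
by rewrite /= !inE !negb_or xy xz xp xq yz yp yq zp zq pq.
Qed.

Lemma psi2_anchor : 1 < type g V psi2 ->
  exists a, [/\ a \notin psi1, a \notin psi2 & sa [set z; q; a] psi2].
Proof.
move=> /(type_gt1_anchor psi2V)[a a2 Sa].
have [yz zq _] := triangle_set3_neq (packing_triangle psi2V).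
have ya : y != a by apply: contraNneq a2 => <-; rewrite !inE eqxx.
exists a; split => //; last by apply: Sa; rewrite ?inE ?eqxx ?orbT.
apply: contra psi12 => a1; apply/eqP.
have Syz : sa [set y; z; a] psi2 by apply: Sa; rewrite ?inE ?eqxx ?orbT.
apply: (singly_attached_eq Syz psi1V).
by apply: (share_edge_of ya); rewrite ?a1 ?inE ?eqxx ?orbT.
Qed.

Lemma psi1_attached_share_edge s : 1 < type g V psi2 -> sa s psi1 -> share_edge s t.
Proof.
move=> /psi2_anchor[a [a1 a2 Sa]] S; apply: contraT => st.
have tzq : ~~ share_edge t [set z; q; a].
  apply: (no_share_edge_sub1 (c := z)); apply/subsetP => i.
  move: vertices_uniq a1 a2; rewrite /= !inE !negb_or => D a1' a2' iS.
  vertex_cases; by rewrite ?eqxx.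
have szq : ~~ share_edge s [set z; q; a].
  apply: (singly_attached_no_share_edge S).
  rewrite -setI_eq0 -subset0; apply/subsetP => i.
  move: vertices_uniq a1 a2; rewrite /= !inE !negb_or => D a1' a2' iS.
  by vertex_cases.
have ts : ~~ share_edge t s by rewrite share_edgeC.
have [P3 card3] := packing_set3 t_triangle (singly_attached_triangle S)
  (singly_attached_triangle Sa) ts tzq szq.
suff : #|[set t; s; [set z; q; a]]| <= #|[set psi1; psi2]|.
  by rewrite card3 cards2; case: (_ != _).
apply: (packing_exchange _ P3); first by rewrite subUset !sub1set psi1V psi2V.
move=> A phi; rewrite !inE => /orP[/orP[]|] /eqP-> phiV sh.
- by case: (t_attached phiV sh) => ->; rewrite eqxx ?orbT.
- by rewrite (singly_attached_eq S phiV sh) eqxx.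
- by rewrite (singly_attached_eq Sa phiV sh) eqxx orbT.
Qed.

Lemma psi1_attached_cases s : 1 < type g V psi2 -> sa s psi1 ->
  s :&: psi1 = [set x; y] \/ s = [set p; x; z].
Proof.
move=> T2 S; have st := psi1_attached_share_edge T2 S.
have [a [a1 si2 sE]] := singly_attached_anchor S.
have anchor_z c : c \in psi1 -> s :&: psi1 = [set c; p] -> a = z.
  move=> c1 fE; apply: contraTeq st => az; apply: (no_share_edge_sub1 (c := c)).
  rewrite sE fE; apply/subsetP => i.
  move: vertices_uniq a1 c1; rewrite /= !inE !negb_or => D a1' c1' iS.
  vertex_cases; by rewrite ?eqxx.
case: (edges_of_set3 (subsetIr s psi1) si2) => fE; first by left.
  have az : a = z by apply: (anchor_z x _ fE); rewrite !inE eqxx.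
  by right; rewrite sE fE az set3C12.
have az : a = z by apply: (anchor_z y _ fE); rewrite !inE eqxx orbT.
have [yz _ _] := triangle_set3_neq (packing_triangle psi2V).
have {}sE : s = [set y; p; z] by rewrite sE fE az.
move/negP: psi12; case; apply/eqP/esym/(singly_attached_eq S psi2V).
by apply: (share_edge_of yz); rewrite ?sE !inE eqxx ?orbT.
Qed.

Lemma not_type33 : ~ (type g V psi1 = 3 /\ type g V psi2 = 3).
Proof.
case=> T1 T2; have /(type_gt1_anchor psi1V)[a a1 Sa] : 1 < type g V psi1 by rewrite T1.
have [_ yp _] := triangle_set3_neq (packing_triangle psi1V).
have S : sa [set y; p; a] psi1 by apply: Sa; rewrite ?inE ?eqxx ?orbT.
have x_notin : x \notin [set y; p; a].
  apply/negP; move: vertices_uniq a1; rewrite /= !inE !negb_or => D a1' xS.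
  by vertex_cases.
have T2' : 1 < type g V psi2 by rewrite T2.
case: (psi1_attached_cases T2' S) => [/setP/(_ x)|sE].
  by rewrite in_setI (negbTE x_notin) !inE eqxx.
by move: x_notin; rewrite sE !inE eqxx orbT.
Qed.

Lemma type13_attached : type g V psi1 = 1 -> type g V psi2 = 3 ->
  (forall f, f \in base g V psi1 -> f \subset t) \/
  ((exists t' : {set T},
      [set s : {set T} | sa s psi1] = [set t'] /\ t' :\: psi1 \subset t) /\
   (forall c, c \in psi1 :&: psi2 -> forall f, f \in base g V psi1 -> c \notin f)).
Proof.
move=> T1 T2; have T2' : 1 < type g V psi2 by rewrite T2.
have /cards1P[e baseE] : #|base g V psi1| == 1 by apply/eqP.
have base_of s : sa s psi1 -> s :&: psi1 = e.
  by move=> S; apply/set1P; rewrite -baseE; apply/baseP; exists s.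
have /baseP[s S _] : e \in base g V psi1 by rewrite baseE set11.
case: (psi1_attached_cases T2' S) => sE.
  left => f; rewrite baseE => /set1P->; rewrite -(base_of s S) sE.
  by rewrite subUset !sub1set !inE !eqxx ?orbT.
have [_ yp xp] := triangle_set3_neq (packing_triangle psi1V).
right; split.
  exists [set p; x; z]; split.
    apply/setP => s'; rewrite !inE; apply/idP/eqP => [S'|->]; last by rewrite -sE.
    case: (psi1_attached_cases T2' S') => // s'E.
    have : p \in s' :&: psi1 by rewrite (base_of s' S') -(base_of s S) sE !inE !eqxx ?orbT.
    by rewrite s'E !inE (eq_sym p x) (negbTE xp) (eq_sym p y) (negbTE yp).
  apply/subsetP => i; rewrite !inE !negb_or => iS.
  by move: vertices_uniq; rewrite /= !inE !negb_or => D; vertex_cases; rewrite eqxx ?orbT.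
move=> c; rewrite !inE => cS f; rewrite baseE => /set1P->; rewrite -(base_of s S) sE !inE.
by apply/negP => cf; move: vertices_uniq; rewrite /= !inE !negb_or => D; vertex_cases.
Qed.

End TwoAttachedTriangles.

End MaximumPacking.

Theorem proposition12 (T : finType) (g : rel T)
  (g_sym : symmetric g) (g_irr : irreflexive g)
  (V : {set {set T}}) (HV : max_packing g V)
  (t psi1 psi2 : {set T})
  (Ht : triangle g t) (HtV : t \notin V)
  (H1 : psi1 \in V) (H2 : psi2 \in V) (H12 : psi1 != psi2)
  (Hs1 : share_edge t psi1) (Hs2 : share_edge t psi2)
  (Honly : forall phi, phi \in V -> share_edge t phi -> phi = psi1 \/ phi = psi2)
  (Hn1 : type g V psi1 <> 0) (Hn2 : type g V psi2 <> 0) :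
  (* (1) type(t) <> [3,3]; so type(t) is [1,3] or [1,1] *)
  (~ (type g V psi1 = 3 /\ type g V psi2 = 3) /\
   ((type g V psi1 = 1 /\ type g V psi2 = 3) \/
    (type g V psi1 = 3 /\ type g V psi2 = 1) \/
    (type g V psi1 = 1 /\ type g V psi2 = 1)))
  /\
  (* (2) *)
  (type g V psi1 = 1 -> type g V psi2 = 3 ->
     (* (i) base(psi1) is an edge of t *)
     (forall f, f \in base g V psi1 -> f \subset t)
     \/
     (* (ii) exactly one triangle t' is singly-attached to psi1, its anchoring
        vertex lies in V(t), and base(psi1) avoids the common vertex of psi1, psi2 *)
     ((exists t' : {set T},
         [set s : {set T} | singly_attached g V s psi1] = [set t'] /\
         t' :\: psi1 \subset t) /\
      (forall c, c \in psi1 :&: psi2 ->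
         forall f, f \in base g V psi1 -> c \notin f))).
Proof.
case: HV => V_packing V_max.
have [x [y [z [p [q [tE E1 E2]]]]]] :=
  two_triangles_normal_form V_packing Ht H1 H2 H12 Hs1 Hs2.
subst t psi1 psi2.
have not33 := not_type33 g_sym V_packing V_max Ht HtV H1 H2 H12 Honly.
split; last exact (type13_attached g_sym V_packing V_max Ht HtV H1 H2 H12 Honly).
split=> //.
have := type_cases g_sym V_packing V_max H1; have := type_cases g_sym V_packing V_max H2.
by case=> T2; case=> T1; rewrite T1 T2 in Hn1 Hn2 not33 *; intuition.
Qed.
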